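(* Let $\lambda,\mu\in P^+$ and let $X\subseteq\mathcal{B}(\lambda)$ and $Y\subseteq\mathcal{B}(\mu)$ be extremal subsets. Then $X\otimes Y=\{x\otimes y: x\in X, y\in Y\}$ is an extremal subset of $\mathcal{B}(\lambda)\otimes\mathcal{B}(\mu)$ if and only if the following holds: for every $i\in I$ and every $x\otimes y\in X\otimes Y$ such that $e_i(x\otimes y)=e_i(x)\otimes y\neq 0$ and $f_i(x\otimes y)=x\otimes f_i(y)\neq 0$, we have $f_i(y)\in Y$.
   Context: Let $\mathfrak g$ be a complex semisimple Lie algebra with Dynkin index set $I$, weight lattice $P$, simple coroots $\alpha_i^\vee$, and dominant weights $P^+=\{\lambda\in P:\langle\alpha_i^\vee,\lambda\rangle\ge 0\ \forall i\in I\}$. For $\lambda\in P^+$, $\mathcal{B}(\lambda)$ denotes Kashiwara's crystal of the irreducible highest weight module of highest weight $\lambda$, with maps $\mathrm{wt}$, and $e_i,f_i:\mathcal{B}(\lambda)\to\mathcal{B}(\lambda)\sqcup\{0\}$, where $\varepsilon_i(b)=\max\{k\ge0: e_i^k(b)\ne0\}$ and $\varphi_i(b)=\max\{k\ge 0: f_i^k(b)\neq 0\}$. The tensor product crystal $\mathcal{B}(\lambda)\otimes\mathcal{B}(\mu)$ has elements $b_1\otimes b_2$ and operators: $e_i(b_1\otimes b_2)=e_i(b_1)\otimes b_2$ if $\varepsilon_i(b_2)\le\varphi_i(b_1)$ and $=b_1\otimes e_i(b_2)$ otherwise; $f_i(b_1\otimes b_2)=f_i(b_1)\otimes b_2$ if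 $\varepsilon_i(b_2)<\varphi_i(b_1)$ and $=b_1\otimes f_i(b_2)$ otherwise (with $0\otimes b=b\otimes 0=0$). An $i$-string of a crystal is a connected component of the graph whose edges are $b\to f_i(b)$ ($f_i(b)\ne 0$). A subset $X$ of a crystal $\mathcal{B}$ (here $\mathcal{B}(\lambda)$ or $\mathcal{B}(\lambda)\otimes\mathcal{B}(\mu)$) is extremal if $X$ is nonempty and for every $i\in I$ and every $i$-string $S$ of $\mathcal{B}$, $S\cap X$ is either $\varnothing$, or $S$, or $\{b\}$ where $b\in S$ satisfies $e_i(b)=0$. *)

From mathcomp Require Import all_boot all_order all_algebra.
Set Implicit Arguments. Unset Strict Implicit. Unset Printing Implicit Defensive.
Import GRing.Theory Num.Theory.

(* Cartan matrix A, with A i j = <alpha_i^vee, alpha_j>. Weights are given in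
   fundamental-weight coordinates: lam : 'I_n -> int with lam i = <alpha_i^vee, lam>.
   The simple root alpha_j thus has coordinates (fun i => A i j). *)
Definition cartan_matrix (n : nat) (A : 'M[int]_n) : Prop :=
  (forall i, A i i = Posz 2) /\
  (forall i j, i != j -> A i j <= 0)%R /\
  (forall i j, (A i j == 0) = (A j i == 0)).

Definition dominant (n : nat) (lam : 'I_n -> int) : Prop :=
  forall i, (0 <= lam i)%R.

(* k-fold iteration of a partial operator; None plays the role of 0. *)
Fixpoint iter_op (T : Type) (g : T -> option T) (k : nat) (b : T) : option T :=
  match k with
  | 0 => Some b
  | k'.+1 => if iter_op g k' b is Some b' then g b' else None
  end.

(* max { k >= 0 : g^k b <> 0 }; on a finite crystal strings have < #|T|+1 elements *)
Definition str_len (T : finType) (g : T -> option T) (b : T) : nat :=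
  \max_(k < #|T|.+1 | iter_op g k b != None) k.

Definition eps_ (T : finType) (n : nat) (e : 'I_n -> T -> option T) i b :=
  str_len (e i) b.
Definition phi_ (T : finType) (n : nat) (f : 'I_n -> T -> option T) i b :=
  str_len (f i) b.

(* A (finite, seminormal) crystal over the Cartan datum A. *)
Record crystal (n : nat) (A : 'M[int]_n) := Crystal {
  cT :> finType;
  wt : cT -> 'I_n -> int;
  ce : 'I_n -> cT -> option cT;
  cf : 'I_n -> cT -> option cT;
  cef : forall i b b', (cf i b = Some b') <-> (ce i b' = Some b);
  cwt_f : forall i b b', cf i b = Some b' -> forall j, wt b' j = (wt b j - A j i)%R;
  cphi_eps : forall i b,
      (Posz (phi_ cf i b) - Posz (eps_ ce i b))%R = wt b i
}.

Definition highest_weight (n : nat) (A : 'M[int]_n) (B : crystal A)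
    (lam : 'I_n -> int) : Prop :=
  exists bl : B, (forall j, wt bl j = lam j) /\ (forall i, ce i bl = None) /\
    forall b : B, connect (fun u v => [exists i, cf i u == Some v]) bl b.

(* Tensor product B1 (x) B2 on T1 * T2 (Kashiwara's convention as in the paper). *)
Section Tensor.
Variables (n : nat) (A : 'M[int]_n) (B1 B2 : crystal A).

Definition te (i : 'I_n) (p : B1 * B2) : option (B1 * B2) :=
  let: (b1, b2) := p in
  if (eps_ (ce (c:=B2)) i b2 <= phi_ (cf (c:=B1)) i b1)%N
  then omap (fun x => (x, b2)) (ce i b1)
  else omap (fun y => (b1, y)) (ce i b2).

Definition tf (i : 'I_n) (p : B1 * B2) : option (B1 * B2) :=
  let: (b1, b2) := p in
  if (eps_ (ce (c:=B2)) i b2 < phi_ (cf (c:=B1)) i b1)%N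
  then omap (fun x => (x, b2)) (cf i b1)
  else omap (fun y => (b1, y)) (cf i b2).
End Tensor.

Definition istring (T : finType) (n : nat) (f : 'I_n -> T -> option T)
    (i : 'I_n) (b : T) : {set T} :=
  [set b' | connect (fun u v => (f i u == Some v) || (f i v == Some u)) b b'].

(* X is extremal: nonempty, and each i-string S meets X in nothing, all of S,
   or exactly one element b of S with e_i b = 0. (Every i-string is istring i b
   for some b.) *)
Definition extremal (T : finType) (n : nat) (e f : 'I_n -> T -> option T)
    (X : {set T}) : Prop :=
  X != set0 /\
  forall i b,
    let S := istring f i b in
    S :&: X = set0 \/ S \subset X \/
    exists b0, [/\ b0 \in S, e i b0 = None & S :&: X = [set b0]].

From mathcomp Require Import all_boot all_order all_algebra.
From mathcomp Require Import zify.
Import Order.TTheory GRing.Theory Num.Theory.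

(* In a crystal, e_i and f_i are mutually inverse partial maps, so an i-string
   contains at most one element killed by e_i. Hence X is extremal iff it is
   nonempty and, for every x in X that is not the top of its i-string, e_i x
   and f_i x (when defined) lie in X. The tensor product rule makes e_i and
   f_i mutually inverse on B(lam) (x) B(mu) as well, because eps_i and phi_i
   move by one along each string (a_ii = 2). For X (x) Y the closure property
   then reduces to that of X and Y, except when e_i acts on the first factor
   and f_i on the second: there f_i (x (x) y) = x (x) f_i y, which lies in
   X (x) Y exactly when f_i y lies in Y. *)

Section IterOp.
Variables (T : finType) (g : T -> option T).

Lemma iter_opS k b :
  iter_op g k.+1 b = if g b is Some c then iter_op g k c else None.
Proof.
elim: k b => [|k IHk] b /=; first by case: (g b).
by move: (IHk b) => /= ->; case: (g b).
Qed.

Lemma iter_op_None_le {k m b} :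
  k <= m -> iter_op g k b = None -> iter_op g m b = None.
Proof.
elim: m => [|m IHm]; first by rewrite leqn0 => /eqP ->.
by rewrite leq_eqVlt => /orP[/eqP -> // | /IHm /[apply] /= ->].
Qed.

(* A potential that increases along g rules out cycles, so the iterates die
   out before the cap #|T| built into str_len. *)
Variable h : T -> int.
Hypothesis h_increasing : forall b c, g b = Some c -> (h b < h c)%R.

Lemma iter_op_card_lt {k b c} :
  iter_op g k b = Some c -> k < #|[set x | (h x <= h c)%R]|.
Proof.
elim: k c => [|k IHk] c /=.
  by move=> [<-]; apply/card_gt0P; exists b; rewrite inE.
case kb: (iter_op g k b) => [c0|] // /h_increasing lt_c0_c.
apply: leq_ltn_trans (IHk _ kb) (proper_card _); apply/properP; split.
  by apply/subsetP => x; rewrite !inE => /le_trans; apply; apply: ltW.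
by exists c; rewrite !inE // -ltNge.
Qed.

Lemma iter_op_card b : iter_op g #|T| b = None.
Proof.
case Tb: (iter_op g #|T| b) => [c|] //.
by have := leq_trans (iter_op_card_lt Tb) (max_card _); rewrite ltnn.
Qed.

Lemma iter_op_last b : exists2 m, m < #|T| &
  (iter_op g m b != None) && (iter_op g m.+1 b == None).
Proof.
suff: forall k, iter_op g k b = None -> exists2 m, m < k &
    (iter_op g m b != None) && (iter_op g m.+1 b == None).
  by apply; apply: iter_op_card.
elim=> [|k IHk] //= k1_None.
case kb: (iter_op g k b) k1_None => [c|] k1_None.
  by exists k; rewrite // kb k1_None.
by have [m lt_m_k m_last] := IHk kb; exists m => //; apply: ltnW.
Qed.

Lemma str_len_eq {b m} : m <= #|T| ->
  iter_op g m b != None -> iter_op g m.+1 b = None -> str_len g b = m.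
Proof.
move=> le_m_T m_Some m1_None; apply/eqP; rewrite eqn_leq; apply/andP; split.
  apply/bigmax_leqP => k k_Some; rewrite leqNgt; apply: contra k_Some => lt_m_k.
  by rewrite (iter_op_None_le lt_m_k m1_None).
exact: (@leq_bigmax_cond _ (fun k : 'I_#|T|.+1 => iter_op g k b != None)
          val (Ordinal (le_m_T : m < #|T|.+1))).
Qed.

Lemma str_len_Some b c : g b = Some c -> str_len g b = (str_len g c).+1.
Proof.
move=> gb; have [m lt_m_T /andP[m_Some /eqP m1_None]] := iter_op_last c.
rewrite (str_len_eq (ltnW lt_m_T) m_Some m1_None).
by apply: str_len_eq; rewrite // iter_opS gb.
Qed.

End IterOp.

Section CrystalStrings.
Context {n : nat} {A : 'M[int]_n}.
Hypothesis HA : cartan_matrix A.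

Lemma wt_cf {B : crystal A} {i} {b c : B} :
  cf i b = Some c -> wt c i = (wt b i - 2)%R.
Proof. by move/cwt_f ->; case: HA => ->. Qed.

Lemma phi_cf {B : crystal A} {i} {b c : B} :
  cf i b = Some c -> phi_ (@cf _ _ B) i b = (phi_ (@cf _ _ B) i c).+1.
Proof.
apply: (@str_len_Some _ _ (fun b => - wt b i)%R) => u v /wt_cf ->; lia.
Qed.

Lemma eps_cf {B : crystal A} {i} {b c : B} :
  cf i b = Some c -> eps_ (@ce _ _ B) i c = (eps_ (@ce _ _ B) i b).+1.
Proof.
move/cef; apply: (@str_len_Some _ _ (fun b => wt b i)) => u v /cef /wt_cf ->.
lia.
Qed.

Lemma tensor_cef {B1 B2 : crystal A} i (u v : B1 * B2) :
  tf i u = Some v <-> te i v = Some u.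
Proof.
case: u v => [b1 b2] [c1 c2]; rewrite /tf /te; split.
- case: ifP => lt_eps_phi.
    case fb1: (cf i b1) => [b1'|] //= [<- <-].
    by move: lt_eps_phi; rewrite (phi_cf fb1) ltnS => ->; move/cef: fb1 => ->.
  case fb2: (cf i b2) => [b2'|] //= [<- <-].
  by rewrite (eps_cf fb2) lt_eps_phi; move/cef: fb2 => ->.
- case: ifP => le_eps_phi.
    case ec1: (ce i c1) => [c1'|] //= [<- <-]; move/cef: ec1 => fc1.
    by rewrite (phi_cf fc1) ltnS le_eps_phi fc1.
  case ec2: (ce i c2) => [c2'|] //= [<- <-]; move/cef: ec2 => fc2.
  by rewrite -(eps_cf fc2) le_eps_phi fc2.
Qed.

End CrystalStrings.

Section ExtremalCriterion.
Context {T : finType} {n : nat} (e f : 'I_n -> T -> option T).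

Definition string_closed (X : {set T}) : Prop :=
  forall i x x', x \in X -> e i x = Some x' ->
    x' \in X /\ forall x'', f i x = Some x'' -> x'' \in X.

Hypothesis ef_inverse : forall i u v, f i u = Some v <-> e i v = Some u.

Local Notation string_edge i :=
  (fun u v => (f i u == Some v) || (f i v == Some u)).

Lemma string_edge_connect_sym i : connect_sym (string_edge i).
Proof. by apply: sym_connect_sym => u v; rewrite orbC. Qed.

Lemma istring_sym {i b w} : w \in istring f i b -> b \in istring f i w.
Proof. by rewrite !inE string_edge_connect_sym. Qed.

Lemma istring_trans {i b w s} :
  w \in istring f i b -> s \in istring f i w -> s \in istring f i b.
Proof. by rewrite !inE; apply: connect_trans. Qed.

Lemma istring_top_iter_e {i t s} : e i t = None -> s \in istring f i t ->
  exists k, iter_op (e i) k s = Some t.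
Proof.
rewrite inE => et_None /connectP[p + ->].
suff reach x : (exists k, iter_op (e i) k x = Some t) ->
    path (string_edge i) x p -> exists k, iter_op (e i) k (last x p) = Some t.
  by apply: reach; exists 0.
elim: p x => [|y p IHp] x [k Hk] //=; first by exists k.
case/andP => /orP[/eqP/ef_inverse e_y | /eqP/ef_inverse e_x]; apply: IHp.
  by exists k.+1; rewrite iter_opS e_y.
case: k Hk => [[x_t] | k]; first by rewrite -x_t e_x in et_None.
by rewrite iter_opS e_x; exists k.
Qed.

Lemma istring_top_uniq {i b t t'} :
  t \in istring f i b -> t' \in istring f i b ->
  e i t = None -> e i t' = None -> t = t'.
Proof.
move=> tS t'S et_None et'_None.
have [[|k]] := istring_top_iter_e et_None (istring_trans (istring_sym tS) t'S).
  by move=> [].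
by rewrite iter_opS et'_None.
Qed.

Lemma string_closed_istring {X i w} :
  string_closed X -> w \in X -> e i w != None -> istring f i w \subset X.
Proof.
move=> clX wX; case ew: (e i w) => [w'|] // _.
apply/subsetP => s; rewrite inE => /connectP[p path_p ->] {s}.
have {ew} := (clX _ _ _ wX ew).2.
elim: p w wX path_p => [|y p IHp] x xX //= /andP[edge_xy path_p] fxX.
case/orP: edge_xy => /eqP f_xy.
  have yX := fxX _ f_xy.
  by apply: IHp path_p _ => //; move/ef_inverse: f_xy => /(clX _ _ _ yX) [].
have /ef_inverse e_xy := f_xy.
apply: IHp path_p _ => [|z]; first by case: (clX _ _ _ xX e_xy).
by rewrite f_xy => -[<-].
Qed.

Lemma extremalP X : extremal e f X <-> X != set0 /\ string_closed X.
Proof.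
split=> [[X0 extX] | [X0 clX]].
  split=> // i x x' xX ex.
  have xSX : x \in istring f i x :&: X by rewrite !inE connect0.
  case: (extX i x) => [SX0 | [SX | [t [_ et_None SXt]]]].
  - by rewrite SX0 inE in xSX.
  - split => [|x'' fx]; apply: (subsetP SX); rewrite inE connect1 //=.
      by have /ef_inverse -> := ex; rewrite eqxx orbT.
    by rewrite fx eqxx.
  - by move: xSX; rewrite SXt in_set1 => /eqP x_t; rewrite x_t et_None in ex.
split=> // i b /=.
case: (boolP [exists w in istring f i b :&: X, e i w != None]).
  case/exists_inP => w /setIP[wS wX] ew; right; left.
  apply/subsetP => s sS; apply: (subsetP (string_closed_istring clX wX ew)).
  exact: istring_trans (istring_sym wS) sS.
move/exists_inPn => tops.
have top_None w : w \in istring f i b :&: X -> e i w = None.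
  by move/tops; case: (e i w).
have [-> | /set0Pn[t tSX]] := eqVneq (istring f i b :&: X) set0; first by left.
right; right.
have et_None := top_None _ tSX.
exists t; split => //; first by case/setIP: tSX.
apply/setP => w; rewrite in_set1; apply/idP/eqP => [wSX | ->] //.
have [/setIP[wS _] /setIP[tS _]] := (wSX, tSX).
exact: istring_top_uniq wS tS (top_None _ wSX) et_None.
Qed.

End ExtremalCriterion.

Arguments extremalP {T n e f}.

Section TensorStrings.
Context {n : nat} {A : 'M[int]_n} (B1 B2 : crystal A).
Variables (X : {set B1}) (Y : {set B2}).

Lemma setX_string_closed :
  string_closed (@ce _ _ B1) (@cf _ _ B1) X ->
  string_closed (@ce _ _ B2) (@cf _ _ B2) Y ->
  (forall i x y, x \in X -> y \in Y ->
     te i (x, y) = omap (fun x' => (x', y)) (ce i x) -> te i (x, y) != None ->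
     forall y', tf i (x, y) = Some (x, y') -> cf i y = Some y' -> y' \in Y) ->
  string_closed (@te _ _ B1 B2) (@tf _ _ B1 B2) (setX X Y).
Proof.
move=> clX clY fY_closed i [x y] z /setXP[xX yY] te_xy.
have te_ne : te i (x, y) != None by rewrite te_xy.
move: te_xy; rewrite /te; case: ifP => le_eps_phi.
  case ex: (ce i x) => [x'|] //= [<-] {z}.
  have [x'X fxX] := clX _ _ _ xX ex.
  split=> [|z]; first exact/setXP.
  case: ifP => lt_eps_phi.
    case fx: (cf i x) => [x''|] //= [<-].
    by apply/setXP; split; first exact: fxX.
  case fy: (cf i y) => [y'|] //= [<-]; apply/setXP; split => //.
  apply: (fY_closed _ _ _ xX yY _ te_ne _ _ fy).
    by rewrite /te le_eps_phi.
  by rewrite /tf lt_eps_phi fy.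
case ey: (ce i y) => [y'|] //= [<-] {z}.
have [y'Y fyY] := clY _ _ _ yY ey.
split=> [|z]; first exact/setXP.
rewrite ifN; last exact: contraFN (@ltnW _ _) le_eps_phi.
by case fy: (cf i y) => [y''|] //= [<-]; apply/setXP; split; last exact: fyY.
Qed.

End TensorStrings.

Theorem theorem1p1 (n : nat) (A : 'M[int]_n) (lam mu : 'I_n -> int)
    (B1 B2 : crystal A) (X : {set B1}) (Y : {set B2}) :
  cartan_matrix A -> dominant lam -> dominant mu ->
  highest_weight B1 lam -> highest_weight B2 mu ->
  extremal (@ce _ _ B1) (@cf _ _ B1) X ->
  extremal (@ce _ _ B2) (@cf _ _ B2) Y ->
  extremal (@te _ _ B1 B2) (@tf _ _ B1 B2) (setX X Y) <->
  (forall (i : 'I_n) (x : B1) (y : B2), x \in X -> y \in Y ->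
     te i (x, y) = omap (fun x' => (x', y)) (ce i x) -> te i (x, y) != None ->
     forall y', tf i (x, y) = Some (x, y') -> cf i y = Some y' -> y' \in Y).
Proof.
move=> HA _ _ _ _ /(extremalP (@cef _ _ B1)) [X0 clX].
move=> /(extremalP (@cef _ _ B2)) [Y0 clY].
rewrite (extremalP (tensor_cef HA)); split=> [[_ clXY] | fY_closed].
  move=> i x y xX yY _; case te_xy: (te i (x, y)) => [z|] // _ y' tf_xy _.
  have xyXY : (x, y) \in setX X Y by apply/setXP.
  by have [_ /(_ _ tf_xy) /setXP[]] := clXY i _ _ xyXY te_xy.
split; last exact: setX_string_closed.
have [[x xX] [y yY]] := (set0Pn _ X0, set0Pn _ Y0).
by apply/set0Pn; exists (x, y); apply/setXP.
Qed.
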